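(* Let $P_n(x;a,b,c,d|q)$ denote the monic Askey–Wilson polynomials. Then $$\Big(x-\tfrac{a^{-1}+a}{2}\Big)P_n(x;aq,b,c,d|q)=P_{n+1}(x;a,b,c,d|q)+k_n^{(a,b,c,d)}P_n(x;a,b,c,d|q),$$ $$\Big(x-\tfrac{b^{-1}+b}{2}\Big)P_n(x;a,bq,c,d|q)=P_{n+1}(x;a,b,c,d|q)+k_n^{(b,a,c,d)}P_n(x;a,b,c,d|q),$$ $$\Big(x-\tfrac{c^{-1}+c}{2}\Big)P_n(x;a,b,cq,d|q)=P_{n+1}(x;a,b,c,d|q)+k_n^{(c,b,a,d)}P_n(x;a,b,c,d|q),$$ $$\Big(x-\tfrac{d^{-1}+d}{2}\Big)P_n(x;a,b,c,dq|q)=P_{n+1}(x;a,b,c,d|q)+k_n^{(d,b,c,a)}P_n(x;a,b,c,d|q),$$ where $$k_n^{(a,b,c,d)}=-\frac{(1-abq^n)(1-acq^n)(1-adq^n)(1-abcdq^{n-1})}{2a(1-abcdq^{2n-1})(1-abcdq^{2n})}$$ and $k_n^{(e_1,e_2,e_3,e_4)}$ denotes this expression with $(a,b,c,d)$ replaced by $(e_1,e_2,e_3,e_4)$.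
   Context: With $(a;q)_0=1$, $(a;q)_k=\prod_{j=0}^{k-1}(1-aq^j)$, $(a_1,\dots,a_i;q)_k=\prod_j(a_j;q)_k$, and $x=\cos\theta$, the Askey–Wilson polynomials are $p_n(x;a,b,c,d|q)=a^{-n}(ab,ac,ad;q)_n\sum_{k=0}^{n}\frac{(q^{-n},abcdq^{n-1},ae^{i\theta},ae^{-i\theta};q)_k}{(ab,ac,ad,q;q)_k}q^k$, and the monic Askey–Wilson polynomials are $P_n(x;a,b,c,d|q)=\dfrac{p_n(x;a,b,c,d|q)}{2^n(abcdq^{n-1};q)_n}$. *)

From HB Require Import structures.
From mathcomp Require Import all_boot all_order all_algebra.
Set Implicit Arguments. Unset Strict Implicit. Unset Printing Implicit Defensive.
Import Order.TTheory GRing.Theory Num.Theory.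
Local Open Scope ring_scope.

Definition qpoch (R : fieldType) (a q : R) (k : nat) : R :=
  \prod_(j < k) (1 - a * q ^+ j).

(* (a e^{i theta}, a e^{-i theta}; q)_k written in terms of x = cos theta:
   (1 - a e^{i th} q^j)(1 - a e^{-i th} q^j) = 1 - 2 a x q^j + a^2 q^{2j}. *)
Definition qpochx (R : fieldType) (a x q : R) (k : nat) : R :=
  \prod_(j < k) (1 - 2%:R * a * x * q ^+ j + a ^+ 2 * q ^+ (2 * j)).

Definition aw (R : fieldType) (x a b c d q : R) (n : nat) : R :=
  a ^- n * qpoch (a * b) q n * qpoch (a * c) q n * qpoch (a * d) q n *
  \sum_(k < n.+1)
     (qpoch (q ^- n) q k * qpoch (a * b * c * d * q ^ (n%:Z - 1)) q k
       * qpochx a x q k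
      / (qpoch (a * b) q k * qpoch (a * c) q k * qpoch (a * d) q k
         * qpoch q q k) * q ^+ k).

Definition awm (R : fieldType) (x a b c d q : R) (n : nat) : R :=
  aw x a b c d q n / (2%:R ^+ n * qpoch (a * b * c * d * q ^ (n%:Z - 1)) q n).

Definition kcoef (R : fieldType) (a b c d q : R) (n : nat) : R :=
  - ((1 - a * b * q ^+ n) * (1 - a * c * q ^+ n) * (1 - a * d * q ^+ n)
      * (1 - a * b * c * d * q ^ (n%:Z - 1)))
  / (2%:R * a * (1 - a * b * c * d * q ^ (2 * n%:Z - 1))
       * (1 - a * b * c * d * q ^+ (2 * n))).

(* Expand P_n in the basis phi_k(a) = (a e^{i theta}, a e^{-i theta}; q)_k.
   Since phi_{k+1}(a) = (1 - 2 a x + a^2) phi_k(a q), multiplying by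
   x - (a^-1 + a)/2 maps phi_k(a q) to -phi_{k+1}(a) / (2 a); and since the k-th
   factor of phi_{k+1}(a) is -2 a q^k (x - ((a q^k)^-1 + a q^k)/2), multiplying by
   x - (b^-1 + b)/2 acts on phi_k(a) by a two-term recurrence.  Comparing
   coefficients, the first two identities reduce to rational identities between
   consecutive coefficients of the terminating 4phi3 expansions.  The other two
   follow from the second, as the expansion is symmetric in (b, c, d). *)

From mathcomp Require Import all_boot all_algebra.
From mathcomp Require Import ring zify.
Set Implicit Arguments. Unset Strict Implicit. Unset Printing Implicit Defensive.
Import GRing.Theory.
Local Open Scope ring_scope.

Section QPochhammer.
Variable R : fieldType.
Implicit Types a q x : R.

Lemma qpoch0 a q : qpoch a q 0 = 1.
Proof. by rewrite /qpoch big_ord0. Qed.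

Lemma qpochS a q k : qpoch a q k.+1 = qpoch a q k * (1 - a * q ^+ k).
Proof. by rewrite /qpoch big_ord_recr. Qed.

Lemma qpochSl a q k : qpoch a q k.+1 = (1 - a) * qpoch (a * q) q k.
Proof.
rewrite /qpoch big_ord_recl /= expr0 mulr1; congr (_ * _).
by apply: eq_bigr => i _; rewrite /= exprS mulrA.
Qed.

Lemma qpochMq a q k : 1 - a != 0 ->
  qpoch (a * q) q k = qpoch a q k * (1 - a * q ^+ k) / (1 - a).
Proof. by move=> ha1; rewrite -qpochS qpochSl mulrAC divff ?mul1r. Qed.

Lemma qpoch_neq0_leq a q m k :
  qpoch a q m != 0 -> (k <= m)%N -> qpoch a q k != 0.
Proof.
elim: m => [|m IH] hm; first by rewrite leqn0 => /eqP ->.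
rewrite leq_eqVlt ltnS => /predU1P[-> // | ]; apply: IH.
by move: hm; rewrite qpochS mulf_eq0 negb_or => /andP[].
Qed.

Lemma qpoch_factor_neq0 a q m k :
  qpoch a q m != 0 -> (k < m)%N -> 1 - a * q ^+ k != 0.
Proof.
move=> /qpoch_neq0_leq h /h.
by rewrite qpochS mulf_eq0 negb_or => /andP[].
Qed.

Lemma qpoch_head_neq0 a q m : qpoch a q m.+1 != 0 -> 1 - a != 0.
Proof. by move=> /qpoch_factor_neq0/(_ (ltn0Sn m)); rewrite expr0 mulr1. Qed.

Lemma qpochVn q n : q != 0 -> qpoch (q ^- n) q n.+1 = 0.
Proof. by move=> hq; rewrite qpochS mulVf ?subrr ?mulr0 ?expf_neq0. Qed.

Lemma expfzB1 q n : q != 0 -> q ^ (n%:Z - 1) = q ^+ n / q.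
Proof. by move=> hq; rewrite expfzDr // expr1z. Qed.

Lemma qpochxS a x q k : qpochx a x q k.+1 =
  qpochx a x q k * (1 - 2%:R * a * x * q ^+ k + a ^+ 2 * q ^+ (2 * k)).
Proof. by rewrite /qpochx big_ord_recr. Qed.

Lemma qpochxSl a x q k :
  qpochx a x q k.+1 = (1 - 2%:R * a * x + a ^+ 2) * qpochx (a * q) x q k.
Proof.
rewrite /qpochx big_ord_recl /= !expr0 !mulr1; congr (_ * _).
apply: eq_bigr => i _; rewrite /bump leq0n add1n mulnS exprD !exprS; ring.
Qed.

End QPochhammer.

Lemma sum_mul_shift (R : pzRingType) (B g h D phi : nat -> R) m :
  B m.+1 = 0 -> D 0%N = B 0%N * g 0%N ->
  (forall k, (k <= m)%N -> D k.+1 = B k.+1 * g k.+1 - B k * h k) ->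
  \sum_(k < m.+1) B k * (g k * phi k - h k * phi k.+1)
  = \sum_(k < m.+2) D k * phi k.
Proof.
move=> Bm D0 DS.
have shiftg : \sum_(k < m.+1) B k * g k * phi k
    = B 0%N * g 0%N * phi 0%N + \sum_(k < m.+1) B k.+1 * g k.+1 * phi k.+1.
  rewrite (big_ord_recr m (fun k : 'I_m.+1 => B k.+1 * g k.+1 * phi k.+1)) /=.
  rewrite Bm !mul0r addr0 big_ord_recl.
  by congr (_ + _); apply: eq_bigr => k _; rewrite lift0.
have shiftD : \sum_(k < m.+1) D (lift ord0 k) * phi (lift ord0 k)
    = \sum_(k < m.+1) (B k.+1 * g k.+1 - B k * h k) * phi k.+1.
  by apply: eq_bigr => k _; rewrite lift0 DS // -ltnS.
rewrite [RHS]big_ord_recl D0 shiftD.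
under [in RHS]eq_bigr do rewrite mulrBl.
rewrite sumrB addrA -shiftg -sumrB.
by apply: eq_bigr => k _; rewrite mulrBr !mulrA.
Qed.

Definition awcoef (R : fieldType) (a b c d q : R) (n k : nat) : R :=
  a ^- n * qpoch (a * b) q n * qpoch (a * c) q n * qpoch (a * d) q n /
    (2%:R ^+ n * qpoch (a * b * c * d * q ^ (n%:Z - 1)) q n) *
  (qpoch (q ^- n) q k * qpoch (a * b * c * d * q ^ (n%:Z - 1)) q k
    / (qpoch (a * b) q k * qpoch (a * c) q k * qpoch (a * d) q k * qpoch q q k)
    * q ^+ k).

Definition joukowski (R : fieldType) (a : R) : R := (a^-1 + a) / 2%:R.

Section Expansion.
Variable R : fieldType.
Implicit Types a b c d q x : R.

Lemma awmE x a b c d q n :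
  awm x a b c d q n = \sum_(k < n.+1) awcoef a b c d q n k * qpochx a x q k.
Proof.
rewrite /awm /aw mulr_sumr mulr_suml; apply: eq_bigr => k _; rewrite /awcoef.
set A := a ^- n * _ * _ * _; set B := 2%:R ^+ n * _.
set X := qpoch _ q k * _; set Y := qpoch _ q k * _ * _ * _.
ring.
Qed.

Lemma awcoef_out a b c d q n : q != 0 -> awcoef a b c d q n n.+1 = 0.
Proof. by move=> hq; rewrite /awcoef qpochVn // !mul0r mulr0. Qed.

Lemma awmE_wide x a b c d q n : q != 0 ->
  awm x a b c d q n = \sum_(k < n.+2) awcoef a b c d q n k * qpochx a x q k.
Proof. by move=> hq; rewrite awmE [RHS]big_ord_recr /= awcoef_out // mul0r addr0. Qed.

Lemma awcoef_perm_bc a b c d q n k : awcoef a b c d q n k = awcoef a c b d q n k.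
Proof.
rewrite /awcoef (_ : a * c * b = a * b * c); last by ring.
by congr (_ / _ * (_ / _ * _)); ring.
Qed.

Lemma awcoef_perm_bd a b c d q n k : awcoef a b c d q n k = awcoef a d c b q n k.
Proof.
rewrite /awcoef (_ : a * d * c * b = a * b * c * d); last by ring.
by congr (_ / _ * (_ / _ * _)); ring.
Qed.

Lemma awm_perm_bc x a b c d q n : awm x a b c d q n = awm x a c b d q n.
Proof. by rewrite !awmE; apply: eq_bigr => k _; rewrite awcoef_perm_bc. Qed.

Lemma awm_perm_bd x a b c d q n : awm x a b c d q n = awm x a d c b q n.
Proof. by rewrite !awmE; apply: eq_bigr => k _; rewrite awcoef_perm_bd. Qed.

Lemma kcoef_perm_bc a b c d q n : kcoef a b c d q n = kcoef a c b d q n.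
Proof.
rewrite /kcoef (_ : a * c * b = a * b * c); last by ring.
by congr (- _ / _); ring.
Qed.

Lemma kcoef_perm_bd a b c d q n : kcoef a b c d q n = kcoef a d c b q n.
Proof.
rewrite /kcoef (_ : a * d * c * b = a * b * c * d); last by ring.
by congr (- _ / _); ring.
Qed.

Hypothesis h2 : 2%:R != 0 :> R.

Lemma mulx_qpochxMq a x q k : a != 0 ->
  (x - joukowski a) * qpochx (a * q) x q k = - (2%:R * a)^-1 * qpochx a x q k.+1.
Proof. by move=> ha; rewrite qpochxSl /joukowski; field; rewrite ha h2. Qed.

Lemma mulx_qpochx a x y q k : a != 0 -> q != 0 ->
  (x - y) * qpochx a x q k = (joukowski (a * q ^+ k) - y) * qpochx a x q k
                             - (2%:R * a * q ^+ k)^-1 * qpochx a x q k.+1.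
Proof.
move=> ha hq; have hqk : q ^+ k != 0 by rewrite expf_neq0.
rewrite qpochxS /joukowski mulnC exprM.
by move: (q ^+ k) hqk => t ht; field; rewrite ha h2 ht.
Qed.

End Expansion.

Section Contiguity.
Variables (R : fieldType) (a b c d q : R) (n : nat).
Hypotheses (h2 : 2%:R != 0 :> R) (ha : a != 0) (hb : b != 0) (hq : q != 0)
  (hqq : qpoch q q n.+1 != 0)
  (hab : qpoch (a * b) q n.+1 != 0) (hac : qpoch (a * c) q n.+1 != 0)
  (had : qpoch (a * d) q n.+1 != 0)
  (habcd : forall m : int, -1 <= m <= 2 * n%:Z ->
             1 - a * b * c * d * q ^ m != 0).

Let e := a * b * c * d * (q ^+ n / q).

Lemma abcd_expz_e : a * b * c * d * q ^ (n%:Z - 1) = e.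
Proof. by rewrite expfzB1. Qed.

Lemma abcd_expzS_e : a * b * c * d * q ^ (n.+1%:Z - 1) = e * q.
Proof. by rewrite expfzB1 // /e exprS; field. Qed.

Lemma abcd_expz_2e : a * b * c * d * q ^ (2 * n%:Z - 1) = e * q ^+ n.
Proof.
have -> : 2 * n%:Z - 1 = (n + n)%N%:Z - 1 by lia.
by rewrite expfzB1 // /e exprD; field.
Qed.

Lemma abcd_expr_2e : a * b * c * d * q ^+ (2 * n) = e * q ^+ n.+1.
Proof. by rewrite /e mul2n -addnn exprD exprS; field. Qed.

Lemma e_factor_neq0 j : (j <= n.+1)%N -> 1 - e * q ^+ j != 0.
Proof.
move=> hj; rewrite (_ : e * q ^+ j = a * b * c * d * q ^ ((n + j)%N%:Z - 1)).
  by apply: habcd; lia.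
by rewrite expfzB1 // exprD /e; field.
Qed.

Lemma e_head_neq0 : 1 - e != 0.
Proof. by have := e_factor_neq0 (leq0n n.+1); rewrite expr0 mulr1. Qed.

Lemma qpoch_e_neq0 j : (j <= n.+2)%N -> qpoch e q j != 0.
Proof.
elim: j => [|j IH] hj; first by rewrite qpoch0 oner_neq0.
by rewrite qpochS mulf_neq0 ?IH ?e_factor_neq0 //; lia.
Qed.

Lemma abcd_factor_neq0 j : (j <= n.+1)%N ->
  q - a * b * c * d * q ^+ n * q ^+ j != 0.
Proof.
move=> /e_factor_neq0; apply: contra_neq => h0.
by apply: (mulfI hq); rewrite mulr0 -h0 /e; field.
Qed.

Lemma abcd_factorS_neq0 j : (j <= n)%N ->
  1 - a * b * c * d * q ^+ n * q ^+ j != 0.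
Proof.
rewrite -ltnS => /e_factor_neq0; apply: contra_neq => h0.
by rewrite -h0 /e exprS; field.
Qed.

Lemma ab_factor_neq0 j : (j <= n)%N -> 1 - a * b * q ^+ j != 0.
Proof. exact: qpoch_factor_neq0 hab. Qed.
Lemma ac_factor_neq0 j : (j <= n)%N -> 1 - a * c * q ^+ j != 0.
Proof. exact: qpoch_factor_neq0 hac. Qed.
Lemma ad_factor_neq0 j : (j <= n)%N -> 1 - a * d * q ^+ j != 0.
Proof. exact: qpoch_factor_neq0 had. Qed.
Lemma q_factor_neq0 j : (j <= n)%N -> 1 - q * q ^+ j != 0.
Proof. exact: qpoch_factor_neq0 hqq. Qed.

(* The side conditions of [field] mention [q ^+ j.+1] as [q * q ^+ j];
   [-exprS] refolds it. *)
Ltac nonzero := first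
  [ exact: oner_neq0
  | by rewrite expf_neq0
  | exact: e_head_neq0
  | exact: qpoch_head_neq0 hab
  | exact: qpoch_head_neq0 hac
  | exact: qpoch_head_neq0 had
  | by apply: qpoch_neq0_leq hab _; lia
  | by apply: qpoch_neq0_leq hac _; lia
  | by apply: qpoch_neq0_leq had _; lia
  | by apply: qpoch_neq0_leq hqq _; lia
  | by apply: qpoch_e_neq0; lia
  | by apply: q_factor_neq0; lia
  | by rewrite -?exprS; apply: e_factor_neq0; lia
  | by rewrite -?exprS; apply: ab_factor_neq0; lia
  | by rewrite -?exprS; apply: ac_factor_neq0; lia
  | by rewrite -?exprS; apply: ad_factor_neq0; lia
  | by apply: abcd_factor_neq0; lia
  | by rewrite -[_ * q ^+ n]mulr1 -(expr0 q) abcd_factor_neq0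
  | by apply: abcd_factorS_neq0; lia
  | done ].

Ltac field_nonzero := field; do ?[apply/andP; split]; rewrite -?/e; nonzero.

Lemma awcoefS k : (k <= n)%N ->
  awcoef a b c d q n k.+1 = awcoef a b c d q n k *
   ((1 - q ^- n * q ^+ k) * (1 - e * q ^+ k) * q
    / ((1 - a * b * q ^+ k) * (1 - a * c * q ^+ k) * (1 - a * d * q ^+ k)
       * (1 - q * q ^+ k))).
Proof.
move=> hk; rewrite /awcoef abcd_expz_e !qpochS !exprS.
field_nonzero.
Qed.

Lemma awcoef_succ0 :
  awcoef a b c d q n.+1 0 = awcoef a b c d q n 0 *
   (a^-1 * (1 - a * b * q ^+ n) * (1 - a * c * q ^+ n) * (1 - a * d * q ^+ n)
    * (1 - e) / (2%:R * (1 - e * q ^+ n) * (1 - e * q ^+ n.+1))).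
Proof.
rewrite /awcoef abcd_expz_e abcd_expzS_e !qpoch0 !expr0 (qpochMq _ _ e_head_neq0).
rewrite !qpochS !exprS.
field_nonzero.
Qed.

Lemma awcoef_succ k : (k <= n)%N ->
  awcoef a b c d q n.+1 k.+1 = awcoef a b c d q n k *
   (a^-1 * (1 - a * b * q ^+ n) * (1 - a * c * q ^+ n) * (1 - a * d * q ^+ n)
    * (1 - e) / (2%:R * (1 - e * q ^+ n) * (1 - e * q ^+ n.+1))
    * ((1 - (q ^+ n.+1)^-1) * (1 - e * q ^+ k) * (1 - e * q ^+ k.+1) / (1 - e) * q
       / ((1 - a * b * q ^+ k) * (1 - a * c * q ^+ k) * (1 - a * d * q ^+ k)
          * (1 - q * q ^+ k)))).
Proof.
move=> hk; rewrite /awcoef abcd_expz_e abcd_expzS_e.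
rewrite [qpoch (q ^- n.+1) _ _]qpochSl (_ : q ^- n.+1 * q = q ^- n); last first.
  by rewrite exprS invfM mulrAC mulVf // mul1r.
rewrite !(qpochMq _ _ e_head_neq0) !qpochS !exprS.
field_nonzero.
Qed.

Lemma awcoef_shift_a k : (k <= n)%N ->
  awcoef (a * q) b c d q n k = awcoef a b c d q n k *
   ((q ^+ n)^-1 * (1 - a * b * q ^+ n) * (1 - a * c * q ^+ n) * (1 - a * d * q ^+ n)
    / (1 - e * q ^+ n) * (1 - e * q ^+ k)
    / ((1 - a * b * q ^+ k) * (1 - a * c * q ^+ k) * (1 - a * d * q ^+ k))).
Proof.
move=> hk; rewrite /awcoef abcd_expz_e.
rewrite (_ : a * q * b * c * d * _ = e * q); last by rewrite expfzB1 // /e; field.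
rewrite ![a * q * _]mulrAC exprMn !(qpochMq _ _ e_head_neq0).
rewrite !(qpochMq _ _ (qpoch_head_neq0 hab)) !(qpochMq _ _ (qpoch_head_neq0 hac)).
rewrite !(qpochMq _ _ (qpoch_head_neq0 had)).
field_nonzero.
Qed.

Lemma awcoef_shift_b k : (k <= n)%N ->
  awcoef a (b * q) c d q n k = awcoef a b c d q n k *
   ((1 - a * b * q ^+ n) * (1 - e * q ^+ k)
    / ((1 - e * q ^+ n) * (1 - a * b * q ^+ k))).
Proof.
move=> hk; rewrite /awcoef abcd_expz_e.
rewrite (_ : a * (b * q) * c * d * _ = e * q); last by rewrite expfzB1 // /e; field.
rewrite mulrA !(qpochMq _ _ e_head_neq0) !(qpochMq _ _ (qpoch_head_neq0 hab)).
field_nonzero.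
Qed.

Lemma awcoef_contiguous_a0 :
  awcoef a b c d q n.+1 0 + kcoef a b c d q n * awcoef a b c d q n 0 = 0.
Proof.
rewrite awcoef_succ0 /kcoef abcd_expz_e abcd_expz_2e abcd_expr_2e !exprS.
field_nonzero.
Qed.

Lemma awcoef_contiguous_a k : (k <= n)%N ->
  awcoef a b c d q n.+1 k.+1 + kcoef a b c d q n * awcoef a b c d q n k.+1
  = - (awcoef (a * q) b c d q n k / (2%:R * a)).
Proof.
move=> hk; rewrite awcoef_succ // awcoefS // awcoef_shift_a //.
rewrite /kcoef abcd_expz_e abcd_expz_2e abcd_expr_2e !exprS.
field_nonzero.
Qed.

(* Unlike the [a] case, these identities use [e * q ^+ n.+1 = a * b * c * d *
   q ^+ (2 * n)], so [e] is unfolded before calling [field]. *)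
Lemma awcoef_contiguous_b0 :
  awcoef a b c d q n.+1 0 + kcoef b a c d q n * awcoef a b c d q n 0
  = awcoef a (b * q) c d q n 0 * (joukowski a - joukowski b).
Proof.
rewrite awcoef_succ0 awcoef_shift_b // /kcoef /joukowski (mulrC b a).
rewrite abcd_expz_e abcd_expz_2e abcd_expr_2e !exprS !expr0 /e.
field_nonzero.
Qed.

Lemma awcoef_contiguous_b k : (k <= n)%N ->
  awcoef a b c d q n.+1 k.+1 + kcoef b a c d q n * awcoef a b c d q n k.+1
  = awcoef a (b * q) c d q n k.+1 * (joukowski (a * q ^+ k.+1) - joukowski b)
    - awcoef a (b * q) c d q n k * (2%:R * a * q ^+ k)^-1.
Proof.
move=> hk; rewrite /kcoef /joukowski (mulrC b a) abcd_expz_e abcd_expz_2e abcd_expr_2e.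
rewrite awcoef_succ // (awcoef_shift_b hk).
have [hkn | hkn] := ltnP k n.
  rewrite (awcoef_shift_b hkn) awcoefS // !exprS /e.
  field_nonzero.
have -> : k = n by lia.
rewrite !awcoef_out // mulr0 mul0r addr0 sub0r !exprS /e.
field_nonzero.
Qed.

Lemma awm_contiguous_a x :
  (x - joukowski a) * awm x (a * q) b c d q n
  = awm x a b c d q n.+1 + kcoef a b c d q n * awm x a b c d q n.
Proof.
rewrite awmE (awmE x a b c d q n.+1) (awmE_wide x a b c d n hq).
rewrite !mulr_sumr -big_split /=.
under [in RHS]eq_bigr do rewrite mulrA -mulrDl.
transitivity (\sum_(k < n.+1) awcoef (a * q) b c d q n k *
    (0 * qpochx a x q k - (2%:R * a)^-1 * qpochx a x q k.+1)).
  by apply: eq_bigr => k _; rewrite mulrCA mulx_qpochxMq // mul0r sub0r mulNr.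
apply: (sum_mul_shift (g := fun=> 0) (h := fun=> (2%:R * a)^-1) (D := fun k =>
  awcoef a b c d q n.+1 k + kcoef a b c d q n * awcoef a b c d q n k)) => [|//|k hk].
- exact: awcoef_out.
- by rewrite mulr0 awcoef_contiguous_a0.
- by rewrite mulr0 sub0r awcoef_contiguous_a.
Qed.

Lemma awm_contiguous_b x :
  (x - joukowski b) * awm x a (b * q) c d q n
  = awm x a b c d q n.+1 + kcoef b a c d q n * awm x a b c d q n.
Proof.
rewrite awmE (awmE x a b c d q n.+1) (awmE_wide x a b c d n hq).
rewrite !mulr_sumr -big_split /=.
under [in RHS]eq_bigr do rewrite mulrA -mulrDl.
transitivity (\sum_(k < n.+1) awcoef a (b * q) c d q n k *
    ((joukowski (a * q ^+ k) - joukowski b) * qpochx a x q k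
     - (2%:R * a * q ^+ k)^-1 * qpochx a x q k.+1)).
  by apply: eq_bigr => k _; rewrite mulrCA mulx_qpochx.
apply: (sum_mul_shift (g := fun k => joukowski (a * q ^+ k) - joukowski b)
  (h := fun k => (2%:R * a * q ^+ k)^-1) (D := fun k =>
  awcoef a b c d q n.+1 k + kcoef b a c d q n * awcoef a b c d q n k)) => [|//|k hk].
- exact: awcoef_out.
- by rewrite expr0 mulr1 awcoef_contiguous_b0.
- exact: awcoef_contiguous_b.
Qed.

End Contiguity.

Theorem lemma4p1 (R : fieldType) (a b c d q x : R) (n : nat)
  (h2 : 2%:R != 0 :> R)
  (ha : a != 0) (hb : b != 0) (hc : c != 0) (hd : d != 0) (hq : q != 0)
  (hqq : qpoch q q n.+1 != 0)
  (hab : qpoch (a * b) q n.+1 != 0) (hac : qpoch (a * c) q n.+1 != 0)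
  (had : qpoch (a * d) q n.+1 != 0)
  (habcd : forall m : int, -1 <= m <= 2 * n%:Z ->
             1 - a * b * c * d * q ^ m != 0) :
  [/\ (x - (a^-1 + a) / 2%:R) * awm x (a * q) b c d q n
        = awm x a b c d q n.+1 + kcoef a b c d q n * awm x a b c d q n,
      (x - (b^-1 + b) / 2%:R) * awm x a (b * q) c d q n
        = awm x a b c d q n.+1 + kcoef b a c d q n * awm x a b c d q n,
      (x - (c^-1 + c) / 2%:R) * awm x a b (c * q) d q n
        = awm x a b c d q n.+1 + kcoef c b a d q n * awm x a b c d q n
    & (x - (d^-1 + d) / 2%:R) * awm x a b c (d * q) q n
        = awm x a b c d q n.+1 + kcoef d b c a q n * awm x a b c d q n].
Proof.
have habcd_perm (u v w : R) : a * u * v * w = a * b * c * d ->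
    forall m : int, -1 <= m <= 2 * n%:Z -> 1 - a * u * v * w * q ^ m != 0.
  by move=> ->.
split.
- exact: awm_contiguous_a.
- exact: awm_contiguous_b.
- rewrite !(awm_perm_bc x a b) kcoef_perm_bc.
  by apply: awm_contiguous_b => //; apply: habcd_perm; ring.
- rewrite !(awm_perm_bd x a b) kcoef_perm_bd.
  by apply: awm_contiguous_b => //; apply: habcd_perm; ring.
Qed.
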